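(* Let $d\in\mathbb{N}$ with $d\ge 2$ and $0<\eta<1/d$. Then $E_+(1+1/\eta)\subseteq \mathcal{D}(\eta)^c\setminus K_d^c$.
   Context: For $\boldsymbol{x}\in\mathbb{R}^d$, $|\boldsymbol{x}|=\max_i|x_i|$; $\|x\|$ denotes distance from $x\in\mathbb{R}$ to the nearest integer, and for vectors $\|\boldsymbol{x}\|=\min_{\boldsymbol{p}\in\mathbb{Z}^d}|\boldsymbol{x}-\boldsymbol{p}|$. $\boldsymbol{r}\boldsymbol{\alpha}$ is the standard inner product. For $\boldsymbol{\alpha}\in\mathbb{R}^d$, $\mathcal{A}_\eta(\boldsymbol{\alpha})$ is the set of accumulation points of $\{|q|^{\eta}(q\boldsymbol{\alpha}-\boldsymbol{p}):q\in\mathbb{Z}\setminus\{0\},\ \boldsymbol{p}\in\mathbb{Z}^d\}$, $\mathcal{D}(\eta)=\{\boldsymbol{\alpha}:\mathcal{A}_\eta(\boldsymbol{\alpha})=\mathbb{R}^d\}$, $\mathcal{D}(\eta)^c=\mathbb{R}^d\setminus\mathcal{D}(\eta)$. $K_d$ is the set of $\boldsymbol{\alpha}\in\mathbb{R}^d$ with $1,\alpha_1,\dots,\alpha_d$ linearly independent over $\mathbb{Q}$, $K_d^c=\mathbb{R}^d\setminus K_d$. For $\omega\ge d$, \[E_+(\omega)=\left\{\boldsymbol{\alpha}\in K_d:\lim_{R\to\infty}R^\omega\min\{\|\boldsymbol{r}\boldsymbol{\alpha}\|:\boldsymbol{r}\in\mathbb{Z}^d\setminus\{\boldsymbol{0}\},\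 0\le r_1,\ldots,r_d\le R\}=0\right\}.\] *)

From HB Require Import structures.
From mathcomp Require Import all_boot all_order all_algebra.
From mathcomp Require Import all_classical all_reals all_analysis.
Set Implicit Arguments. Unset Strict Implicit. Unset Printing Implicit Defensive.
Import Order.TTheory GRing.Theory Num.Theory.
Local Open Scope ring_scope.
Local Open Scope classical_set_scope.

Section Defs.
Variable R : realType.
Variable d : nat.

Definition vec := 'I_d -> R.

Definition supnorm (x : vec) : R := \big[Num.max/0]_(i < d) `|x i|.

Definition distZ (x : R) : R :=
  Num.min (x - (Num.floor x)%:~R) ((Num.floor x + 1)%:~R - x).

Definition scaled_pt (eta : R) (alpha : vec) (q : int) (p : 'I_d -> int) : vec :=
  fun i => (`|q|%:~R) `^ eta * (q%:~R * alpha i - (p i)%:~R).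

(* A_eta(alpha): accumulation points of the set
   { |q|^eta (q alpha - p) : q in Z \ {0}, p in Z^d } *)
Definition Aeta (eta : R) (alpha : vec) : set vec :=
  [set y | forall eps : R, 0 < eps ->
     exists (q : int) (p : 'I_d -> int),
       q != 0 /\ scaled_pt eta alpha q p != y /\
       supnorm (fun i => scaled_pt eta alpha q p i - y i) < eps].

Definition Dset (eta : R) : set vec := [set alpha | Aeta eta alpha = setT].

Definition Kset : set vec :=
  [set alpha | forall (c0 : rat) (c : 'I_d -> rat),
     ratr c0 + \sum_(i < d) ratr (c i) * alpha i = 0 ->
     c0 = 0 /\ forall i, c i = 0].

(* min { ||r alpha|| : r in Z^d \ {0}, 0 <= r_i <= N }  (N : nat);
   the default value 1 is never reached when N >= 1 since ||.|| <= 1/2 *)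
Definition minbox (alpha : vec) (N : nat) : R :=
  \big[Num.min/1]_(r : {ffun 'I_d -> 'I_N.+1} | [exists i, val (r i) != 0%N])
     distZ (\sum_(i < d) (val (r i))%:R * alpha i).

(* E_+(omega): alpha in K_d with  R^omega * min{...} -> 0  as real R -> +oo
   (for real R >= 0, 0 <= r_i <= R with r_i integer iff r_i <= floor R) *)
Definition Eplus (omega : R) : set vec :=
  [set alpha | Kset alpha /\
     (x `^ omega * minbox alpha `|Num.floor x|%N : R) @[x --> +oo]
       --> 0%R].

End Defs.

From HB Require Import structures.
From mathcomp Require Import all_boot all_order all_algebra.
From mathcomp Require Import all_classical all_reals all_analysis.
From mathcomp Require Import ring lra zify.
Import Order.TTheory GRing.Theory Num.Theory.
Local Open Scope ring_scope.
Local Open Scope classical_set_scope.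

(* Idea: (1, ..., 1) is not an accumulation point of the points
   |q|^eta (q alpha - p).  For the finitely many q below a threshold these points
   lie on finitely many translated lattices, which stay away from (1, ..., 1).
   For a large q with s (q alpha_i - p_i) within 1/2 of 1 for every i, where
   s = |q|^eta, let X = s / (2 d).  Membership in E_+(1 + 1/eta) yields r in [0, X]^d,
   r <> 0, with ||r alpha|| < theta X^-(1 + 1/eta), and X^(1 + 1/eta) is
   comparable to s |q|.  Then the integer q n - r p, with n the integer nearest to
   r alpha, satisfies s (q n - r p) = sum_i r_i s (q alpha_i - p_i) - e with
   |e| < 1/4, a number strictly between 0 and s; so 0 < q n - r p < 1. *)

Section IntDistance.
Context {R : realType}.
Implicit Types (t : R) (k : int).

Lemma distZ_ge0 t : 0 <= distZ t.
Proof. by have /andP[] := floor_itv t; rewrite /distZ !intrD1 le_min => *; lra. Qed.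

Lemma distZ_le t k : distZ t <= `|t - k%:~R|.
Proof.
have /andP[] := floor_itv t; rewrite /distZ !intrD1 ge_min => fl_le lt_fl1.
have [k_le|fl_lt] := lerP k (Num.floor t).
- have : k%:~R <= (Num.floor t)%:~R :> R by rewrite ler_int.
  by rewrite ler_normr => ?; apply/orP; left; lra.
- have : (Num.floor t + 1)%:~R <= k%:~R :> R by rewrite ler_int; lia.
  by rewrite intrD1 !ler_normr => ?; apply/orP; right; lra.
Qed.

Lemma distZ_eq0 t : distZ t = 0 -> t = (Num.floor t)%:~R.
Proof.
have /andP[] := floor_itv t; rewrite /distZ !intrD1 => ? ?.
by case: (lerP (t - _) (_ - t)) => ? ?; lra.
Qed.

Lemma nearest_int t : exists n : int, `|t - n%:~R| <= distZ t.
Proof.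
have /andP[] := floor_itv t; rewrite /distZ !intrD1 => ? ?.
case: (lerP (t - _) (_ - t)) => ?.
- by exists (Num.floor t); rewrite ler_norml; apply/andP; split; lra.
- by exists (Num.floor t + 1); rewrite intrD1 ler_norml; apply/andP; split; lra.
Qed.

Definition int_gap t : R := if distZ t == 0 then 1 else distZ t.

Lemma int_gap_gt0 t : 0 < int_gap t.
Proof. by rewrite /int_gap; case: eqP => // /eqP; rewrite lt_def distZ_ge0 andbT. Qed.

Lemma int_gap_le t k : t != k%:~R -> int_gap t <= `|t - k%:~R|.
Proof.
move=> t_neq_k; rewrite /int_gap.
case: ifPn => [/eqP/distZ_eq0 t_int|_]; last exact: distZ_le.
move: t_neq_k; rewrite t_int (inj_eq (@intr_inj _)) -intrB -intr_norm ler1z.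
by rewrite -gtz0_ge1 normr_gt0 subr_eq0.
Qed.

Lemma pos_lb_int_ball (f : int -> R) (Q : nat) :
  (forall q, q != 0 -> 0 < f q) ->
  exists2 e, 0 < e & forall q, q != 0 -> (`|q| <= Q)%N -> e <= f q.
Proof.
move=> f_gt0; elim: Q => [|Q [e e_gt0 le_e]].
  by exists 1 => // q q_neq0; rewrite leqn0 absz_eq0 (negbTE q_neq0).
exists (Num.min e (Num.min (f Q.+1) (f (- Q.+1%:Z)))).
  by rewrite !lt_min e_gt0 !f_gt0 // oppr_eq0.
move=> q q_neq0; rewrite leq_eqVlt ltnS => /orP[/eqP q_Q|/(le_e _ q_neq0) le_eq].
- have [->|->] : q = Q.+1 \/ q = - Q.+1%:Z by lia.
  + by rewrite !ge_min lexx orbT.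
  + by rewrite !ge_min lexx !orbT.
- by rewrite ge_min le_eq.
Qed.

End IntDistance.

Lemma coord_le_supnorm {R : realType} {d : nat} (v : vec R d) i :
  `|v i| <= supnorm v.
Proof. by rewrite /supnorm (bigD1 i) //= le_max lexx. Qed.

Section SmallDenominators.
Context {R : realType} {d : nat}.
Variables (eta : R) (alpha y : vec R d).

Lemma scaled_pt_gap {q p i} : q != 0 -> scaled_pt eta alpha q p i != y i ->
  `|q|%:~R `^ eta * int_gap (q%:~R * alpha i - y i / `|q|%:~R `^ eta)
    <= `|scaled_pt eta alpha q p i - y i|.
Proof.
move=> q_neq0; rewrite -subr_eq0; set s := _ `^ eta; set t := _ - _ / s.
have s_gt0 : 0 < s by rewrite powR_gt0 // ltr0z normr_gt0.
have -> : scaled_pt eta alpha q p i - y i = s * (t - (p i)%:~R).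
  by rewrite /scaled_pt -/s /t; field; rewrite gt_eqF.
rewrite mulf_eq0 negb_or subr_eq0 => /andP[_ t_neq].
by rewrite normrM gtr0_norm // ler_pM2l // int_gap_le.
Qed.

Lemma scaled_pt_isolated (Q : nat) :
  exists2 e, 0 < e & forall q p i, q != 0 -> (`|q| <= Q)%N ->
    scaled_pt eta alpha q p i != y i ->
    e <= `|scaled_pt eta alpha q p i - y i|.
Proof.
pose g q := \big[Num.min/1]_(i < d)
  (`|q|%:~R `^ eta * int_gap (q%:~R * alpha i - y i / `|q|%:~R `^ eta)).
have [|e e_gt0 le_e] := pos_lb_int_ball g Q.
  move=> q q_neq0; apply: lt_bigmin => // i _.
  by rewrite mulr_gt0 ?int_gap_gt0 // powR_gt0 // ltr0z normr_gt0.
exists e => // q p i q_neq0 qQ neq.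
apply: le_trans (le_e q q_neq0 qQ) (le_trans _ (scaled_pt_gap q_neq0 neq)).
exact: bigmin_le.
Qed.

End SmallDenominators.

Section LargeDenominators.
Context {R : realType} {d : nat} {alpha : vec R d}.

Lemma weighted_sum_bounds {u : 'I_d -> R} {r : 'I_d -> nat} {X : R} :
  (forall i, 1/2 < u i < 3/2) -> (exists i, r i != 0%N) ->
  (forall i, (r i)%:R <= X) ->
  1/2 <= \sum_i (r i)%:R * u i <= 3/2 * (d%:R * X).
Proof.
move=> u_bd [j rj_neq0] r_le; apply/andP; split.
- have rj_ge1 : 1 <= (r j)%:R :> R by rewrite (ler_nat R 1) lt0n.
  have rest_ge0 : 0 <= \sum_(i | i != j) (r i)%:R * u i.
    by apply: sumr_ge0 => i _; have /andP[? _] := u_bd i; rewrite mulr_ge0 //; lra.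
  by rewrite (bigD1 j) //=; have /andP[? _] := u_bd j; nra.
- apply: (@le_trans _ _ (\sum_(i < d) X * (3/2))).
    apply: ler_sum => i _; have /andP[? ?] := u_bd i.
    by have := r_le i; have : 0 <= (r i)%:R :> R by []; nra.
  by rewrite sumr_const card_ord -mulr_natl; lra.
Qed.

Lemma no_small_relation {q : int} {p : 'I_d -> int} {r : 'I_d -> nat} {n : int}
    {s X : R} :
  1 <= s -> (forall i, `|s * (q%:~R * alpha i - (p i)%:~R) - 1| < 1/2) ->
  (exists i, r i != 0%N) -> (forall i, (r i)%:R <= X) -> d%:R * X <= s / 2 ->
  ~ `|s * q%:~R * (\sum_i (r i)%:R * alpha i - n%:~R)| < 1/4.
Proof.
move=> s_ge1 near1 r_neq0 r_le dX; rewrite ltr_norml => /andP[small_lo small_hi].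
pose m : int := q * n - \sum_i (r i)%:Z * p i.
pose u := fun i => s * (q%:~R * alpha i - (p i)%:~R).
have u_bd i : 1/2 < u i < 3/2.
  by move: (near1 i); rewrite /u ltr_norml => /andP[? ?]; apply/andP; split; lra.
have /andP[S_lo S_hi] := weighted_sum_bounds u_bd r_neq0 r_le.
have sum_u : \sum_i (r i)%:R * u i = s * q%:~R * (\sum_i (r i)%:R * alpha i)
                                    - s * \sum_i (r i)%:R * (p i)%:~R.
  by rewrite !mulr_sumr -sumrB; apply: eq_bigr => i _; rewrite /u; ring.
have sm : s * m%:~R = \sum_i (r i)%:R * u i
                     - s * q%:~R * (\sum_i (r i)%:R * alpha i - n%:~R).
  rewrite sum_u /m intrB intrM rmorph_sum.
  by rewrite (eq_bigr (fun i => (r i)%:R * (p i)%:~R)) => [|i _]; [ring|rewrite rmorphM].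
have m_gt0 : 0 < m%:~R :> R by rewrite -(pmulr_rgt0 _ (lt_le_trans ltr01 s_ge1)) sm; lra.
have m_lt1 : m%:~R < 1 :> R.
  by rewrite -(ltr_pM2l (lt_le_trans ltr01 s_ge1)) mulr1 sm; lra.
by move: m_gt0 m_lt1; rewrite ltr0z ltrz1 => ? ?; lia.
Qed.

End LargeDenominators.

Section Eplus.
Context {R : realType} {d : nat} {alpha : vec R d}.

Lemma minbox_lt {N b} : b <= 1 -> minbox alpha N < b ->
  exists2 r : {ffun 'I_d -> 'I_N.+1}, [exists i, val (r i) != 0%N] &
    distZ (\sum_(i < d) (val (r i))%:R * alpha i) < b.
Proof.
by move=> b_le1 /bigmin_ltP[|[r r_neq0 r_lt]]; [rewrite ltNge b_le1 | exists r].
Qed.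

Lemma Eplus_small_relations {omega theta : R} :
  0 <= omega -> 0 < theta <= 1 -> Eplus omega alpha ->
  exists2 M : R, 0 <= M & forall X, M < X ->
    exists (r : 'I_d -> nat) (n : int),
      [/\ exists i, r i != 0%N, forall i, (r i)%:R <= X &
          `|\sum_i (r i)%:R * alpha i - n%:~R| < theta / X `^ omega].
Proof.
move=> omega_ge0 /andP[theta_gt0 theta_le1] [_ lim0].
have [M [_ M_near]] := cvgr0_norm_lt _ lim0 _ theta_gt0.
exists (Num.max M 1) => [|X]; first by rewrite le_max ler01 orbT.
rewrite gt_max => /andP[MX X_gt1].
have Xom_ge1 : 1 <= X `^ omega by rewrite -(powRr0 X) ler_powR // ltW.
have Xom_gt0 : 0 < X `^ omega by apply: lt_le_trans Xom_ge1.
have b_le1 : theta / X `^ omega <= 1.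
  by rewrite ler_pdivrMr // mul1r (le_trans theta_le1).
have minbox_small : minbox alpha `|Num.floor X| < theta / X `^ omega.
  by rewrite ltr_pdivlMr // mulrC; exact: le_lt_trans (ler_norm _) (M_near X MX).
have [r r_neq0 r_close] := minbox_lt b_le1 minbox_small.
have [n n_near] := nearest_int (\sum_(i < d) (val (r i))%:R * alpha i).
exists (fun i => val (r i)), n; split.
- by have /existsP[i ?] := r_neq0; exists i.
- move=> i; apply: le_trans (floor_le X).
  have : (val (r i) <= `|Num.floor X|)%N by rewrite -ltnS ltn_ord.
  by rewrite -(ler_nat R) natr_absz ger0_norm // floor_ge0 ltW // (lt_trans ltr01).
- exact: le_lt_trans n_near r_close.
Qed.

End Eplus.

Lemma powR_one_plus_inv (R : realType) (a eta : R) : 0 <= a -> 0 < eta ->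
  (a `^ eta) `^ (1 + 1 / eta) = a `^ eta * a.
Proof.
move=> a_ge0 eta_gt0; rewrite -powRrM mulrDr mulr1 div1r mulfV ?gt_eqF //.
by rewrite powRD ?powRr1 // gt_eqF // ltr_wpDr.
Qed.

Section NotDense.
Context {R : realType} {d : nat} {eta : R} {alpha : vec R d}.
Hypotheses (d_gt0 : (0 < d)%N) (eta_gt0 : 0 < eta)
  (alphaE : Eplus (1 + 1 / eta) alpha).

Lemma large_denominators_far : exists a0 : R,
  forall q p, a0 < `|q|%:~R ->
    ~ (forall i, `|scaled_pt eta alpha q p i - 1| < 1/2).
Proof.
(* With s = |q|^eta and X = s / c we get X^om c^om = s |q|, so this theta turns
   ||r alpha|| < theta / X^om into the bound 1/4 of [no_small_relation]. *)
set om := 1 + 1 / eta; set c : R := 2 * d%:R.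
have d_ge1 : 1 <= d%:R :> R by rewrite (ler_nat R 1).
have c_ge1 : 1 <= c by rewrite /c; lra.
have om_ge0 : 0 <= om by rewrite addr_ge0 // divr_ge0 // ltW.
have com_ge1 : 1 <= c `^ om by rewrite -(powRr0 c) ler_powR.
set theta := 1 / (4 * c `^ om).
have theta_bd : 0 < theta <= 1.
  by rewrite divr_gt0 ?ler_pdivrMr /=; lra.
have [M M_ge0 relM] := Eplus_small_relations om_ge0 theta_bd alphaE.
exists ((c * M) `^ eta^-1).
move=> q p a_gt near1; set a : R := `|q|%:~R in a_gt.
have a_ge1 : 1 <= a.
  by move: (le_lt_trans (powR_ge0 _ _) a_gt); rewrite /a ltr0z ler1z; lia.
set s := a `^ eta; set X := s / c.
have s_ge1 : 1 <= s by rewrite /s -(powRr0 a) ler_powR // ltW.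
have MX : M < X.
  rewrite /X ltr_pdivlMr ?(lt_le_trans ltr01) // mulrC.
  have -> : c * M = ((c * M) `^ eta^-1) `^ eta.
    by rewrite -powRrM mulVf ?gt_eqF // powRr1 // mulr_ge0 // (le_trans ler01).
  by apply: gt0_ltr_powR; rewrite // nnegrE ?powR_ge0 // (le_trans ler01).
have [r [n [r_neq0 r_le close]]] := relM X MX.
have dX : d%:R * X = s / 2.
  by rewrite /X /c; field; rewrite pnatr_eq0 -lt0n d_gt0.
apply: (no_small_relation (n := n) s_ge1 near1 r_neq0 r_le); first by rewrite dX.
have key : X `^ om * c `^ om = s * a.
  rewrite -powRM ?divr_ge0 ?(le_trans ler01) // /X mulfVK ?gt_eqF ?(lt_le_trans ltr01) //.
  exact: powR_one_plus_inv.
have Xom_gt0 : 0 < X `^ om.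
  by rewrite powR_gt0 // divr_gt0 // (lt_le_trans ltr01).
have -> : 1 / 4 = s * a * (theta / X `^ om) :> R.
  by rewrite -key /theta; field; rewrite !gt_eqF // (lt_le_trans ltr01).
have sa_gt0 : 0 < s * a by rewrite mulr_gt0 // (lt_le_trans ltr01).
by rewrite !normrM -intr_norm -/a gtr0_norm ?(lt_le_trans ltr01) // ltr_pM2l.
Qed.

Lemma ones_notin_Aeta : ~ Aeta eta alpha (fun _ => 1).
Proof.
have [a0 far] := large_denominators_far.
have [e e_gt0 iso] := scaled_pt_isolated eta alpha (fun _ => 1) `|Num.ceil a0|%N.
move=> /(_ (Num.min e (1/2))) [|q [p [q_neq0 [pt_neq close]]]].
  by rewrite lt_min e_gt0 /=; lra.
have close_i i : `|scaled_pt eta alpha q p i - 1| < Num.min e (1/2).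
  exact: le_lt_trans (coord_le_supnorm (fun i => scaled_pt eta alpha q p i - 1) i) close.
have [q_small|q_large] := leqP `|q|%N `|Num.ceil a0|%N.
- have [i pt_neq_i] : exists i, scaled_pt eta alpha q p i != 1.
    apply: contrapT => all_eq; move/eqP: pt_neq; apply; apply/funext => i.
    by apply: contrapT => /eqP neq; apply: all_eq; exists i.
  have := iso q p i q_neq0 q_small pt_neq_i; have := close_i i.
  by rewrite lt_min => /andP[lt_e _]; rewrite leNgt lt_e.
- apply: (far q p) => [|i]; last by have := close_i i; rewrite lt_min => /andP[].
  apply: le_lt_trans (ceil_ge a0) _; apply: le_lt_trans (ler_norm _) _.
  by rewrite -intr_norm -!natr_absz ltr_nat.
Qed.

End NotDense.

Theorem lemma7 (R : realType) (d : nat) (eta : R) :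
  (2 <= d)%N -> 0 < eta -> eta < 1 / d%:R ->
  @Eplus R d (1 + 1 / eta) `<=` (~` @Dset R d eta) `\` (~` @Kset R d).
Proof.
(* The bound eta < 1/d only guarantees 1 + 1/eta > d; the argument does not need it. *)
move=> d_ge2 eta_gt0 _ alpha alphaE; split; last by apply; case: alphaE.
move=> /= alphaD; apply: (ones_notin_Aeta (ltnW d_ge2) eta_gt0 alphaE).
by rewrite alphaD.
Qed.
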